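(* Let $\mathbb{T}$ be a geometric theory over $\Sigma$. Then the topological spaces $M_{\mathbb{T}}$ and $I_{\mathbb{T}}$ (with the logical topologies) are sober, i.e.\ every completely prime filter of open sets is the neighbourhood filter of a unique point.
   Context: Let $\Sigma$ be a single-sorted first-order signature with equality, $\kappa\geq|\Sigma|+\aleph_0$ an infinite cardinal, and $\mathbb{S}$ a fixed set of cardinality at least $\kappa$. An $\mathbb{S}$-indexed $\Sigma$-structure is one whose underlying set is a quotient $A/{\sim}$ of a subset $A\subseteq\mathbb{S}$ (elements $[a]$). $M_\Sigma$ is the set of all such structures and $I_\Sigma$ the set of all isomorphisms between them, with domain and codomain maps $d,c$. The logical topology on $M_\Sigma$ is the coarsest containing the sets $\{\mathbf{M}:[a]\in\mathbf{M}\}$ ($a\in\mathbb{S}$, meaning $a$ lies in the subset of which $\mathbf{M}$'s universe is a quotient), $\{\mathbf{M}:[\mathbf{a}]\in R^{\mathbf{M}}\}$ (each $n$-ary relation symbol $R$, including equality and nullary symbols, each $n$-tuple $\mathbf{a}$ from $\mathbb{S}$), and $\{\mathbf{M}:f^{\mathbf{M}}([\mathbf{a}])=[b]\}$ (each function symbol $f$). The logical topology on $I_\Sigma$ is the coarsest making $d,c$ continuous and containing all $\{\mathbf{f}:[a]\in d(\mathbf{f}),[b]\in c(\mathbf{f}),\mathbf{f}([a])=[b]\}$. $M_{\mathbb{T}}\subseteq M_\Sigma$ is the set of $\mathbb{S}$-indexed $\mathbb{T}$-models and $I_{\mathbb{T}}\subseteq I_\Sigma$ the isomorphisms between them, with subspace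 topologies. A completely prime filter of opens is a filter $F$ of open sets such that whenever a union $\bigcup\mathcal{S}$ of open sets lies in $F$, some member of $\mathcal{S}$ lies in $F$. *)

From mathcomp Require Import all_boot.
Set Implicit Arguments.
Unset Strict Implicit.
Unset Printing Implicit Defensive.

Record signature := Signature {
  funsym : Type;
  relsym : Type;                 (* relation symbols (equality is built in) *)
  farity : funsym -> nat;
  rarity : relsym -> nat }.

Section Syntax.
Variable Sig : signature.

Inductive term (n : nat) : Type :=
| tvar : 'I_n -> term n
| tfun (f : funsym Sig) : ('I_(farity f) -> term n) -> term n.

(* geometric formulas in a context of n variables; Gex binds variable n *)
Inductive gformula : nat -> Type :=
| Grel n (r : relsym Sig) : ('I_(rarity r) -> term n) -> gformula n
| Geq n : term n -> term n -> gformula n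
| Gtop n : gformula n
| Gbot n : gformula n
| Gand n : gformula n -> gformula n -> gformula n
| Gor n (I : Type) : (I -> gformula n) -> gformula n
| Gex n : gformula n.+1 -> gformula n.

Record sequent := Sequent {
  ctx : nat;
  antec : gformula ctx;
  succ : gformula ctx }.

Definition theory := sequent -> Prop.
End Syntax.

(** * S-indexed structures: universe A/~ with A a subset of S.
    Represented by a partial equivalence relation [eqv] on S whose domain is A
    (so [eqv a a] means a ∈ A, and [eqv a b] means [a] = [b]); relations and
    functions on A/~ are represented by saturated relations on representatives. *)
Section Structures.
Variables (Sig : signature) (S : Type).

Record structure := Structure {
  eqv : S -> S -> Prop;
  eqv_sym : forall a b, eqv a b -> eqv b a;
  eqv_trans : forall a b c, eqv a b -> eqv b c -> eqv a c;
  srel : forall r : relsym Sig, ('I_(rarity r) -> S) -> Prop;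
  rel_dom : forall r as_, @srel r as_ -> forall i, eqv (as_ i) (as_ i);
  rel_sat : forall r as_ bs, @srel r as_ -> (forall i, eqv (as_ i) (bs i)) -> @srel r bs;
  sfn : forall f : funsym Sig, ('I_(farity f) -> S) -> S -> Prop;  (* graph: f([as]) = [b] *)
  fn_dom : forall f as_ b, @sfn f as_ b -> (forall i, eqv (as_ i) (as_ i)) /\ eqv b b;
  fn_sat : forall f as_ bs b c, @sfn f as_ b -> (forall i, eqv (as_ i) (bs i)) ->
             eqv b c -> @sfn f bs c;
  fn_total : forall f as_, (forall i, eqv (as_ i) (as_ i)) -> exists b, @sfn f as_ b;
  fn_func : forall f as_ b c, @sfn f as_ b -> @sfn f as_ c -> eqv b c }.

Arguments srel s r _ : clear implicits.
Arguments sfn s f _ _ : clear implicits.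

Definition indom (M : structure) (a : S) := eqv M a a.

(* isomorphisms between S-indexed structures; [imap a b] means f([a]) = [b] *)
Record iso := Iso {
  isrc : structure;
  itgt : structure;
  imap : S -> S -> Prop;
  imap_dom : forall a b, imap a b -> indom isrc a /\ indom itgt b;
  imap_sat : forall a a' b b', imap a b -> eqv isrc a a' -> eqv itgt b b' -> imap a' b';
  imap_total : forall a, indom isrc a -> exists b, imap a b;
  imap_func : forall a b b', imap a b -> imap a b' -> eqv itgt b b';
  imap_inj : forall a a' b, imap a b -> imap a' b -> eqv isrc a a';
  imap_surj : forall b, indom itgt b -> exists a, imap a b;
  imap_rel : forall r as_ bs, (forall i, imap (as_ i) (bs i)) ->
               (srel isrc r as_ <-> srel itgt r bs);
  imap_fn : forall f as_ bs a b, (forall i, imap (as_ i) (bs i)) -> imap a b ->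
               (sfn isrc f as_ a <-> sfn itgt f bs b) }.

(** Semantics of geometric logic; valuations are maps nat -> S, only the first
    n values matter (and must lie in A) for a formula in context n. *)
Fixpoint teval (M : structure) n (v : nat -> S) (t : term Sig n) (b : S) : Prop :=
  match t with
  | @tvar _ _ i => eqv M (v i) b
  | @tfun _ _ f args => exists bs : 'I_(farity f) -> S,
      (forall i, teval M v (args i) (bs i)) /\ sfn M f bs b
  end.

Fixpoint sat (M : structure) n (v : nat -> S) (phi : gformula Sig n) : Prop :=
  match phi with
  | @Grel _ _ r args => exists bs : 'I_(rarity r) -> S,
      (forall i, teval M v (args i) (bs i)) /\ srel M r bs
  | @Geq _ _ t1 t2 => exists b1 b2, teval M v t1 b1 /\ teval M v t2 b2 /\ eqv M b1 b2
  | @Gtop _ _ => True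
  | @Gbot _ _ => False
  | @Gand _ _ p q => sat M v p /\ sat M v q
  | @Gor _ _ J ps => exists i : J, sat M v (ps i)
  | @Gex _ n p => exists a, indom M a /\ sat M (fun k => if k == n then a else v k) p
  end.

Definition admissible (M : structure) n (v : nat -> S) := forall i, i < n -> indom M (v i).

Definition seq_valid (M : structure) (s : sequent Sig) : Prop :=
  forall v, admissible M (ctx s) v -> sat M v (antec s) -> sat M v (succ s).

Definition is_model (T : theory Sig) (M : structure) := forall s, T s -> seq_valid M s.

Inductive gen_open X (B : (X -> Prop) -> Prop) : (X -> Prop) -> Prop :=
| go_basic U : B U -> gen_open B U
| go_top : gen_open B (fun _ => True)
| go_inter U V : gen_open B U -> gen_open B V -> gen_open B (fun x => U x /\ V x)
| go_union (F : (X -> Prop) -> Prop) : (forall U, F U -> gen_open B U) ->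
    gen_open B (fun x => exists U, F U /\ U x).

Definition subspace_open X (opn : (X -> Prop) -> Prop) (P : X -> Prop)
  (V : {x | P x} -> Prop) : Prop :=
  exists U, opn U /\ forall x, V x <-> U (proj1_sig x).

Definition M_subbasis (U : structure -> Prop) : Prop :=
  (exists a, U = fun M => indom M a) \/
  (exists a b, U = fun M => eqv M a b) \/
  (exists r as_, U = fun M => srel M r as_) \/
  (exists f as_ b, U = fun M => sfn M f as_ b).

Definition M_open := gen_open M_subbasis.

Definition I_subbasis (U : iso -> Prop) : Prop :=
  (exists V, M_open V /\ U = fun f => V (isrc f)) \/
  (exists V, M_open V /\ U = fun f => V (itgt f)) \/
  (exists a b, U = fun f => indom (isrc f) a /\ indom (itgt f) b /\ imap f a b).

Definition I_open := gen_open I_subbasis.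

Definition MT_open (T : theory Sig) := @subspace_open _ M_open (is_model T).
Definition IT_open (T : theory Sig) :=
  @subspace_open _ I_open (fun f => is_model T (isrc f) /\ is_model T (itgt f)).
End Structures.

Definition completely_prime_filter X (opn : (X -> Prop) -> Prop)
  (F : (X -> Prop) -> Prop) : Prop :=
  (forall U, F U -> opn U) /\
  F (fun _ => True) /\
  (forall U V, F U -> opn V -> (forall x, U x -> V x) -> F V) /\
  (forall U V, F U -> F V -> F (fun x => U x /\ V x)) /\
  (forall Fam : (X -> Prop) -> Prop, (forall U, Fam U -> opn U) ->
     F (fun x => exists U, Fam U /\ U x) -> exists U, Fam U /\ F U).

Definition sober X (opn : (X -> Prop) -> Prop) : Prop :=
  forall F, completely_prime_filter opn F ->
    exists! x : X, forall U, opn U -> (F U <-> U x).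

From mathcomp Require Import all_boot.
From Stdlib Require Import FunctionalExtensionality PropExtensionality ProofIrrelevance.
Set Implicit Arguments.
Unset Strict Implicit.
Unset Printing Implicit Defensive.

(* A completely prime filter F of opens of M_T determines a structure M_F: put
   [a] = [b], R([as]) and f([as]) = [b] exactly when the corresponding subbasic
   open lies in F. The filter laws give the axioms of a structure, complete
   primeness making the function symbols total. By induction on opens, F is the
   neighbourhood filter of M_F. Since the satisfaction set of a geometric formula
   is open and every sequent of T holds on all of M_T, the sequents of T hold in
   M_F. Points are separated by subbasic opens, whence uniqueness. For I_T, the
   construction applied to the images of the filter under the domain and
   codomain maps gives two structures, and the graph opens give the isomorphism
   between them. *)

Lemma pred_ext X (U V : X -> Prop) : (forall x, U x <-> V x) -> U = V.
Proof.
by move=> UV; apply: functional_extensionality => x; apply: propositional_extensionality.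
Qed.

Lemma forall_ordS k (Q : 'I_k.+1 -> Prop) :
  (forall i, Q i) <-> Q ord0 /\ (forall j : 'I_k, Q (lift ord0 j)).
Proof.
split=> [Q_all|[Q0 QS] i]; first by split.
by case: (unliftP ord0 i) => [j ->|->].
Qed.

Section GeneratedTopology.
Variables (X : Type) (B : (X -> Prop) -> Prop).

Lemma gen_open_ext U V : gen_open B U -> (forall x, U x <-> V x) -> gen_open B V.
Proof. by move=> oU /pred_ext <-. Qed.

Lemma gen_open_exists J (U : J -> X -> Prop) :
  (forall j, gen_open B (U j)) -> gen_open B (fun x => exists j, U j x).
Proof.
move=> oU; apply: (@gen_open_ext (fun x => exists W, (exists j, W = U j) /\ W x)).
  by apply: go_union => W [j ->].
move=> x; split=> [[W [[j ->] Wx]]|[j Ujx]]; first by exists j.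
by exists (U j); split; first by exists j.
Qed.

Lemma gen_open_bot : gen_open B (fun _ => False).
Proof.
apply: (gen_open_ext (go_union (F := fun _ => False) (fun U (no : False) => match no with end))).
by move=> x; split=> [[U []]|].
Qed.

Lemma gen_open_forall_ord k (U : 'I_k -> X -> Prop) :
  (forall i, gen_open B (U i)) -> gen_open B (fun x => forall i, U i x).
Proof.
elim: k U => [|k IH] U oU.
  by apply: (gen_open_ext (go_top B)) => x; split=> // _ [].
apply: (gen_open_ext (go_inter (oU ord0) (IH _ (fun j => oU (lift ord0 j))))).
by move=> x; rewrite forall_ordS.
Qed.

(* A completely prime filter of opens of the subspace [P], read on the ambient
   opens through [U |-> U ∩ P]. *)
Record cp_filter_on (P : X -> Prop) (G : (X -> Prop) -> Prop) : Prop := CpFilterOn {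
  cpf_mono : forall U V, G U -> gen_open B V -> (forall x, P x -> U x -> V x) -> G V;
  cpf_top : G (fun _ => True);
  cpf_and : forall U V, G U -> G V -> G (fun x => U x /\ V x);
  cpf_prime : forall (J : Type) (W : J -> X -> Prop), (forall j, gen_open B (W j)) ->
    G (fun x => exists j, W j x) -> exists j, G (W j) }.

Section CompletelyPrimeFilterOn.
Variables (P : X -> Prop) (G : (X -> Prop) -> Prop).
Hypothesis HG : cp_filter_on P G.

Lemma cpf_mono2 U V W : G U -> G V -> gen_open B W ->
  (forall x, P x -> U x -> V x -> W x) -> G W.
Proof.
move=> GU GV oW UVW; apply: (cpf_mono HG (cpf_and HG GU GV) oW) => x Px [].
exact: UVW.
Qed.

Lemma cpf_forall_ord k (U : 'I_k -> X -> Prop) :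
  (forall i, gen_open B (U i)) -> (forall i, G (U i)) -> G (fun x => forall i, U i x).
Proof.
elim: k U => [|k IH] U oU GU.
  by apply: (cpf_mono HG (cpf_top HG) (gen_open_forall_ord oU)) => x _ _ [].
apply: (cpf_mono2 (GU ord0) (IH _ (fun j => oU _) (fun j => GU _))).
  exact: gen_open_forall_ord.
by move=> x _ U0 US; apply/forall_ordS.
Qed.

Lemma cpf_point x : (forall W, B W -> (G W <-> W x)) ->
  forall W, gen_open B W -> (G W <-> W x).
Proof.
move=> G_basic W oW; elim: oW => {W} [W BW| |U V oU IHU oV IHV|Fam oFam IH].
- exact: G_basic.
- by split=> // _; exact: cpf_top HG.
- split=> [GUV|[/IHU GU /IHV GV]].
    by split; [apply/IHU|apply/IHV]; apply: (cpf_mono HG GUV) => // y _ [].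
  exact: (cpf_and HG GU GV).
- have oW (U : {U | Fam U}) : gen_open B (sval U) by case: U => U FU; exact: oFam.
  split=> [GFam|[U [FU Ux]]].
    have GW : G (fun y => exists U : {U | Fam U}, sval U y).
      apply: (cpf_mono HG GFam (gen_open_exists oW)) => y _ [U [FU Uy]].
      by exists (exist _ U FU).
    have [[U FU] /= GU] := cpf_prime HG oW GW.
    by exists U; split=> //; apply/IH.
  apply: (cpf_mono HG ((IH U FU).2 Ux) (go_union oFam)) => y _ Uy.
  by exists U.
Qed.

End CompletelyPrimeFilterOn.
End GeneratedTopology.

Definition trace_filter X (P : X -> Prop) (F : ({x | P x} -> Prop) -> Prop)
  (U : X -> Prop) := F (fun x => U (sval x)).

Lemma trace_cp_filter X (B : (X -> Prop) -> Prop) (P : X -> Prop) F :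
  completely_prime_filter (@subspace_open _ (gen_open B) P) F ->
  cp_filter_on B P (trace_filter F).
Proof.
case=> _ [Ftop [Fmono [Fand Fprime]]]; split=> //.
- move=> U V FU oV UV; apply: (Fmono _ _ FU); first by exists V.
  by case=> x Px; exact: UV.
- by move=> U V; exact: Fand.
- move=> J W oW FW.
  pose Fam Z := exists j, Z = fun x : {x | P x} => W j (sval x).
  have oFam Z : Fam Z -> @subspace_open _ (gen_open B) P Z by case=> j ->; exists (W j).
  have FFam : F (fun x => exists Z, Fam Z /\ Z x).
    apply: (Fmono _ _ FW).
      exists (fun y => exists j, W j y); split; first exact: gen_open_exists.
      move=> x; split=> [[Z [[j ->] Wx]]|[j Wx]]; first by exists j.
      by exists (fun x => W j (sval x)); split; first by exists j.
    by move=> x [j Wx]; exists (fun x => W j (sval x)); split; first by exists j.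
  by have [_ [[j ->] FWj]] := Fprime Fam oFam FFam; exists j.
Qed.

Lemma cp_filter_pushforward X Y (BX : (X -> Prop) -> Prop) (BY : (Y -> Prop) -> Prop)
  (P : X -> Prop) (Q : Y -> Prop) (h : X -> Y) G :
  cp_filter_on BX P G ->
  (forall V, gen_open BY V -> gen_open BX (fun x => V (h x))) -> (forall x, P x -> Q (h x)) ->
  cp_filter_on BY Q (fun V => G (fun x => V (h x))).
Proof.
move=> HG h_cont hPQ; split.
- move=> U V GU oV UV; apply: (cpf_mono HG GU (h_cont _ oV)) => x Px.
  exact: UV (hPQ _ Px).
- exact: cpf_top HG.
- by move=> U V GU GV; exact: (cpf_and HG GU GV).
- by move=> J W oW; exact: (cpf_prime HG (fun j => h_cont _ (oW j))).
Qed.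

Lemma subspace_sober X (B : (X -> Prop) -> Prop) (P : X -> Prop) :
  (forall x y, P x -> P y -> (forall W, B W -> (W x <-> W y)) -> x = y) ->
  (forall G, cp_filter_on B P G -> exists2 x, P x & forall W, B W -> (G W <-> W x)) ->
  sober (@subspace_open _ (gen_open B) P).
Proof.
move=> separated point F /trace_cp_filter HG.
have [x Px Gx] := point _ HG.
have Fx := cpf_point HG Gx.
exists (exist _ x Px); split=> [U [W [oW /pred_ext ->]]|[y Py] Fy]; first exact: Fx.
have xy : x = y.
  apply: separated => // W BW; rewrite -(Gx W BW); apply: Fy.
  by exists W; split; first exact: go_basic.
by subst y; rewrite (proof_irrelevance _ Px Py).
Qed.

Section LogicalTopology.
Context {Sig : signature} {S : Type}.

Lemma M_open_indom (a : S) : M_open (fun M : structure Sig S => indom M a).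
Proof. by apply: go_basic; left; exists a. Qed.

Lemma M_open_eqv (a b : S) : M_open (fun M : structure Sig S => eqv M a b).
Proof. by apply: go_basic; right; left; exists a, b. Qed.

Lemma M_open_srel r (as_ : 'I_(rarity r) -> S) :
  M_open (fun M : structure Sig S => srel M as_).
Proof. by apply: go_basic; right; right; left; exists r, as_. Qed.

Lemma M_open_sfn f (as_ : 'I_(farity f) -> S) b :
  M_open (fun M : structure Sig S => sfn M as_ b).
Proof. by apply: go_basic; right; right; right; exists f, as_, b. Qed.

Lemma teval_open n (t : term Sig n) (v : nat -> S) b :
  M_open (fun M => teval M v t b).
Proof.
elim: t b => [i|f args IH] b /=; first exact: M_open_eqv.
apply: gen_open_exists => bs; apply: go_inter; last exact: M_open_sfn.
by apply: gen_open_forall_ord => i; exact: IH.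
Qed.

Lemma sat_open n (phi : gformula Sig n) (v : nat -> S) : M_open (fun M => sat M v phi).
Proof.
elim: phi v => {n} [n r args|n t1 t2|n|n|n p IHp q IHq|n J ps IH|n p IH] v /=.
- apply: gen_open_exists => bs; apply: go_inter; last exact: M_open_srel.
  by apply: gen_open_forall_ord => i; exact: teval_open.
- apply: gen_open_exists => b1; apply: gen_open_exists => b2.
  apply: go_inter; first exact: teval_open.
  by apply: go_inter; [exact: teval_open|exact: M_open_eqv].
- exact: go_top.
- exact: gen_open_bot.
- exact: go_inter (IHp v) (IHq v).
- by apply: gen_open_exists => j; exact: IH.
- apply: gen_open_exists => a; apply: go_inter; first exact: M_open_indom.
  exact: IH.
Qed.

Lemma structure_eq_subbasic (M N : structure Sig S) :
  (forall W, M_subbasis W -> (W M <-> W N)) -> M = N.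
Proof.
move=> MN.
have eqvE a b : eqv M a b <-> eqv N a b.
  by apply: (MN (fun M => eqv M a b)); right; left; exists a, b.
have srelE r (as_ : 'I_(rarity r) -> S) : srel M as_ <-> srel N as_.
  by apply: (MN (fun M => srel M as_)); right; right; left; exists r, as_.
have sfnE f (as_ : 'I_(farity f) -> S) b : sfn M as_ b <-> sfn N as_ b.
  by apply: (MN (fun M => sfn M as_ b)); right; right; right; exists f, as_, b.
move: M N {MN} eqvE srelE sfnE.
case=> e1 ? ? r1 ? ? f1 ? ? ? ?; case=> e2 ? ? r2 ? ? f2 ? ? ? ? /= eqvE srelE sfnE.
have e12 : e1 = e2.
  by apply: functional_extensionality => a; apply: pred_ext; exact: eqvE.
have r12 : r1 = r2.
  by apply: functional_extensionality_dep => r; apply: pred_ext; exact: srelE.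
have f12 : f1 = f2.
  apply: functional_extensionality_dep => f; apply: functional_extensionality => as_.
  by apply: pred_ext; exact: sfnE.
by subst; f_equal; apply: proof_irrelevance.
Qed.

Lemma I_open_src (V : structure Sig S -> Prop) :
  M_open V -> I_open (fun f : iso Sig S => V (isrc f)).
Proof. by move=> oV; apply: go_basic; left; exists V. Qed.

Lemma I_open_tgt (V : structure Sig S -> Prop) :
  M_open V -> I_open (fun f : iso Sig S => V (itgt f)).
Proof. by move=> oV; apply: go_basic; right; left; exists V. Qed.

Definition iso_maps (a b : S) (f : iso Sig S) :=
  indom (isrc f) a /\ indom (itgt f) b /\ imap f a b.

Lemma I_open_maps (a b : S) : I_open (iso_maps a b).
Proof. by apply: go_basic; right; right; exists a, b. Qed.

Lemma iso_mapsE a b (f : iso Sig S) : iso_maps a b f <-> imap f a b.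
Proof. by split=> [[_ []]|fab] //; have [? ?] := imap_dom fab. Qed.

Lemma iso_eq_subbasic (f g : iso Sig S) :
  (forall W, I_subbasis W -> (W f <-> W g)) -> f = g.
Proof.
move=> fg.
have srcE : isrc f = isrc g.
  apply: structure_eq_subbasic => W BW; apply: (fg (fun h => W (isrc h))).
  by left; exists W; split; first exact: go_basic.
have tgtE : itgt f = itgt g.
  apply: structure_eq_subbasic => W BW; apply: (fg (fun h => W (itgt h))).
  by right; left; exists W; split; first exact: go_basic.
have mapsE a b : imap f a b <-> imap g a b.
  rewrite -!iso_mapsE; apply: fg.
  by right; right; exists a, b.
move: f g {fg} srcE tgtE mapsE.
case=> s1 t1 m1 ? ? ? ? ? ? ? ?; case=> s2 t2 m2 ? ? ? ? ? ? ? ? /= s12 t12 mapsE.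
have m12 : m1 = m2.
  by apply: functional_extensionality => a; apply: pred_ext; exact: mapsE.
by subst; f_equal; apply: proof_irrelevance.
Qed.

End LogicalTopology.

Section FilterStructure.
Variables (Sig : signature) (S : Type) (P : structure Sig S -> Prop).
Variable G : (structure Sig S -> Prop) -> Prop.
Hypothesis HG : cp_filter_on (@M_subbasis Sig S) P G.

Lemma filter_eqv_sym a b : G (fun N => eqv N a b) -> G (fun N => eqv N b a).
Proof. by move=> Gab; apply: (cpf_mono HG Gab (M_open_eqv _ _)) => N _; exact: eqv_sym. Qed.

Lemma filter_eqv_trans a b c :
  G (fun N => eqv N a b) -> G (fun N => eqv N b c) -> G (fun N => eqv N a c).
Proof.
by move=> Gab Gbc; apply: (cpf_mono2 HG Gab Gbc (M_open_eqv _ _)) => N _; exact: eqv_trans.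
Qed.

Lemma filter_rel_dom r (as_ : 'I_(rarity r) -> S) :
  G (fun N => srel N as_) -> forall i, G (fun N => eqv N (as_ i) (as_ i)).
Proof.
by move=> Gr i; apply: (cpf_mono HG Gr (M_open_eqv _ _)) => N _ Nr; exact: rel_dom Nr i.
Qed.

Lemma filter_all_eqv k (as_ bs : 'I_k -> S) :
  (forall i, G (fun N => eqv N (as_ i) (bs i))) ->
  G (fun N => forall i, eqv N (as_ i) (bs i)).
Proof. exact: (cpf_forall_ord HG (fun i => M_open_eqv (as_ i) (bs i))). Qed.

Lemma filter_rel_sat r (as_ bs : 'I_(rarity r) -> S) :
  G (fun N => srel N as_) -> (forall i, G (fun N => eqv N (as_ i) (bs i))) ->
  G (fun N => srel N bs).
Proof.
move=> Gr /filter_all_eqv Gab; apply: (cpf_mono2 HG Gr Gab (M_open_srel _)) => N _.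
exact: rel_sat.
Qed.

Lemma filter_fn_dom f (as_ : 'I_(farity f) -> S) b :
  G (fun N => sfn N as_ b) ->
  (forall i, G (fun N => eqv N (as_ i) (as_ i))) /\ G (fun N => eqv N b b).
Proof.
move=> Gf; split=> [i|]; apply: (cpf_mono HG Gf (M_open_eqv _ _)) => N _ Nf.
  exact: (fn_dom Nf).1 i.
exact: (fn_dom Nf).2.
Qed.

Lemma filter_fn_sat f (as_ bs : 'I_(farity f) -> S) b c :
  G (fun N => sfn N as_ b) -> (forall i, G (fun N => eqv N (as_ i) (bs i))) ->
  G (fun N => eqv N b c) -> G (fun N => sfn N bs c).
Proof.
move=> Gf /filter_all_eqv Gab Gbc.
apply: (cpf_mono2 HG Gf (cpf_and HG Gab Gbc) (M_open_sfn _ _)) => N _ Nf [].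
exact: fn_sat Nf.
Qed.

Lemma filter_fn_total f (as_ : 'I_(farity f) -> S) :
  (forall i, G (fun N => eqv N (as_ i) (as_ i))) -> exists b, G (fun N => sfn N as_ b).
Proof.
move=> /filter_all_eqv Gas; apply: (cpf_prime HG (fun b => M_open_sfn as_ b)).
apply: (cpf_mono HG Gas); last by move=> N _; exact: fn_total.
exact: gen_open_exists (fun b => M_open_sfn as_ b).
Qed.

Lemma filter_fn_func f (as_ : 'I_(farity f) -> S) b c :
  G (fun N => sfn N as_ b) -> G (fun N => sfn N as_ c) -> G (fun N => eqv N b c).
Proof.
by move=> Gb Gc; apply: (cpf_mono2 HG Gb Gc (M_open_eqv _ _)) => N _; exact: fn_func.
Qed.

Definition filter_structure : structure Sig S :=
  {| eqv := fun a b => G (fun N => eqv N a b);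
     eqv_sym := filter_eqv_sym;
     eqv_trans := filter_eqv_trans;
     srel := fun r as_ => G (fun N => srel N as_);
     rel_dom := filter_rel_dom;
     rel_sat := filter_rel_sat;
     sfn := fun f as_ b => G (fun N => sfn N as_ b);
     fn_dom := filter_fn_dom;
     fn_sat := filter_fn_sat;
     fn_total := filter_fn_total;
     fn_func := filter_fn_func |}.

Lemma filter_structure_open W : M_open W -> (G W <-> W filter_structure).
Proof.
apply: (cpf_point HG) => {}W.
by case=> [[a ->]|[[a [b ->]]|[[r [as_ ->]]|[f [as_ [b ->]]]]]].
Qed.

End FilterStructure.

Lemma filter_structure_model Sig S (T : theory Sig) G
  (HG : cp_filter_on (@M_subbasis Sig S) (is_model T) G) :
  is_model T (filter_structure HG).
Proof.
have satE n (phi : gformula Sig n) v := filter_structure_open HG (sat_open phi v).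
move=> s Ts v adm /satE Gant; apply/satE.
have Gadm : G (fun N => forall i : 'I_(ctx s), indom N (v i)).
  apply/(filter_structure_open HG); first by apply: gen_open_forall_ord => i; exact: M_open_indom.
  by move=> i; apply: adm.
apply: (cpf_mono2 HG Gant Gadm (sat_open _ _)) => N NT Nant Nadm.
by apply: (NT s Ts v) => // i lt_i_ctx; exact: Nadm (Ordinal lt_i_ctx).
Qed.

Lemma MT_sober Sig S (T : theory Sig) : sober (@MT_open Sig S T).
Proof.
apply: subspace_sober => [M N _ _|G HG]; first exact: structure_eq_subbasic.
exists (filter_structure HG); first exact: filter_structure_model.
by move=> W BW; apply: filter_structure_open; exact: go_basic.
Qed.

Section FilterIso.
Variables (Sig : signature) (S : Type) (Q : structure Sig S -> Prop).
Variable G : (iso Sig S -> Prop) -> Prop.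
Hypothesis HG : cp_filter_on (@I_subbasis Sig S) (fun f => Q (isrc f) /\ Q (itgt f)) G.

Lemma src_cp_filter : cp_filter_on (@M_subbasis Sig S) Q (fun V => G (fun f => V (isrc f))).
Proof. exact: (cp_filter_pushforward HG (@I_open_src Sig S) (fun f Qf => proj1 Qf)). Qed.

Lemma tgt_cp_filter : cp_filter_on (@M_subbasis Sig S) Q (fun V => G (fun f => V (itgt f))).
Proof. exact: (cp_filter_pushforward HG (@I_open_tgt Sig S) (fun f Qf => proj2 Qf)). Qed.

Let Msrc := filter_structure src_cp_filter.
Let Mtgt := filter_structure tgt_cp_filter.

Lemma filter_imap_dom a b : G (iso_maps a b) -> indom Msrc a /\ indom Mtgt b.
Proof.
move=> Gab; split.
  by apply: (cpf_mono HG Gab (I_open_src (M_open_eqv a a))) => f _ [].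
by apply: (cpf_mono HG Gab (I_open_tgt (M_open_eqv b b))) => f _ [_ []].
Qed.

Lemma filter_imap_sat a a' b b' :
  G (iso_maps a b) -> eqv Msrc a a' -> eqv Mtgt b b' -> G (iso_maps a' b').
Proof.
move=> Gab Gaa' Gbb'.
apply: (cpf_mono2 HG Gab (cpf_and HG Gaa' Gbb') (I_open_maps _ _)).
move=> f _ [_ [_ fab]] [aa' bb']; split; [|split].
- exact: eqv_trans (eqv_sym aa') aa'.
- exact: eqv_trans (eqv_sym bb') bb'.
- exact: imap_sat fab aa' bb'.
Qed.

Lemma filter_imap_total a : indom Msrc a -> exists b, G (iso_maps a b).
Proof.
move=> Ga; apply: (cpf_prime HG (fun b => I_open_maps a b)).
apply: (cpf_mono HG Ga); first exact: gen_open_exists (fun b => I_open_maps a b).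
by move=> f _ fa; have [b fab] := imap_total fa; exists b; apply/iso_mapsE.
Qed.

Lemma filter_imap_surj b : indom Mtgt b -> exists a, G (iso_maps a b).
Proof.
move=> Gb; apply: (cpf_prime HG (fun a => I_open_maps a b)).
apply: (cpf_mono HG Gb); first exact: gen_open_exists (fun a => I_open_maps a b).
by move=> f _ fb; have [a fab] := imap_surj fb; exists a; apply/iso_mapsE.
Qed.

Lemma filter_imap_func a b b' :
  G (iso_maps a b) -> G (iso_maps a b') -> eqv Mtgt b b'.
Proof.
move=> Gb Gb'; apply: (cpf_mono2 HG Gb Gb' (I_open_tgt (M_open_eqv b b'))).
by move=> f _ /iso_mapsE fab /iso_mapsE fab'; exact: imap_func fab fab'.
Qed.

Lemma filter_imap_inj a a' b :
  G (iso_maps a b) -> G (iso_maps a' b) -> eqv Msrc a a'.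
Proof.
move=> Ga Ga'; apply: (cpf_mono2 HG Ga Ga' (I_open_src (M_open_eqv a a'))).
by move=> f _ /iso_mapsE fab /iso_mapsE fa'b; exact: imap_inj fab fa'b.
Qed.

Lemma filter_all_maps k (as_ bs : 'I_k -> S) :
  (forall i, G (iso_maps (as_ i) (bs i))) -> G (fun f => forall i, iso_maps (as_ i) (bs i) f).
Proof. exact: (cpf_forall_ord HG (fun i => I_open_maps (as_ i) (bs i))). Qed.

Lemma filter_imap_rel r (as_ bs : 'I_(rarity r) -> S) :
  (forall i, G (iso_maps (as_ i) (bs i))) -> (srel Msrc as_ <-> srel Mtgt bs).
Proof.
move=> /filter_all_maps Gab; split=> Gr.
  apply: (cpf_mono2 HG Gr Gab (I_open_tgt (M_open_srel bs))) => f _ fr fab.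
  exact/(imap_rel (fun i => (fab i).2.2)).
apply: (cpf_mono2 HG Gr Gab (I_open_src (M_open_srel as_))) => f _ fr fab.
exact/(imap_rel (fun i => (fab i).2.2)).
Qed.

Lemma filter_imap_fn fs (as_ bs : 'I_(farity fs) -> S) a b :
  (forall i, G (iso_maps (as_ i) (bs i))) -> G (iso_maps a b) ->
  (sfn Msrc as_ a <-> sfn Mtgt bs b).
Proof.
move=> /filter_all_maps Gargs Gab; have Gall := cpf_and HG Gargs Gab.
split=> Gf.
  apply: (cpf_mono2 HG Gf Gall (I_open_tgt (M_open_sfn bs b))) => f _ ff [fargs fab].
  exact/(imap_fn (fun i => (fargs i).2.2) fab.2.2).
apply: (cpf_mono2 HG Gf Gall (I_open_src (M_open_sfn as_ a))) => f _ ff [fargs fab].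
exact/(imap_fn (fun i => (fargs i).2.2) fab.2.2).
Qed.

Definition filter_iso : iso Sig S :=
  {| isrc := Msrc; itgt := Mtgt; imap := fun a b => G (iso_maps a b);
     imap_dom := filter_imap_dom;
     imap_sat := filter_imap_sat;
     imap_total := filter_imap_total;
     imap_func := filter_imap_func;
     imap_inj := filter_imap_inj;
     imap_surj := filter_imap_surj;
     imap_rel := filter_imap_rel;
     imap_fn := filter_imap_fn |}.

Lemma filter_iso_open W : I_open W -> (G W <-> W filter_iso).
Proof.
apply: (cpf_point HG) => {}W.
case=> [[V [oV ->]]|[[V [oV ->]]|[a [b ->]]]].
- exact: filter_structure_open src_cp_filter V oV.
- exact: filter_structure_open tgt_cp_filter V oV.
- split=> [Gab|[_ [_ //]]].
  by have [? ?] := filter_imap_dom Gab.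
Qed.

End FilterIso.

Lemma IT_sober Sig S (T : theory Sig) : sober (@IT_open Sig S T).
Proof.
apply: subspace_sober => [f g _ _|G HG]; first exact: iso_eq_subbasic.
exists (filter_iso HG); first by split; exact: filter_structure_model.
by move=> W BW; apply: filter_iso_open; exact: go_basic.
Qed.

Theorem proposition2p6 (Sig : signature) (S : Type)
  (HS : exists e : (funsym Sig + relsym Sig + nat) -> S, injective e)
  (T : theory Sig) :
  sober (@MT_open Sig S T) /\ sober (@IT_open Sig S T).
Proof. by split; [exact: MT_sober|exact: IT_sober]. Qed.
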